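(* Let $\Lambda$ be an ordered abelian group and $(X,d)$ a geodesic $\Lambda$-metric space such that $(x\cdot y)_z\in\Lambda$ for all $x,y,z\in X$. For $\delta\in\Lambda$, $\delta\geqslant 0$, consider the properties: (H1,$\delta$): $(X,d)$ is $\delta$-hyperbolic; (H2,$\delta$): every geodesic triangle in $X$ is $\delta$-thin; (H3,$\delta$): for every geodesic triangle with sides $[x,y],[y,z],[x,z]$ and every $u\in[x,y]$ there exists $w\in[x,z]\cup[y,z]$ with $d(u,w)\leqslant\delta$. Then (H1,$\delta$)$\Rightarrow$(H2,$4\delta$), (H2,$\delta$)$\Rightarrow$(H1,$2\delta$), (H2,$\delta$)$\Rightarrow$(H3,$\delta$), (H3,$\delta$)$\Rightarrow$(H2,$4\delta$), (H1,$\delta$)$\Rightarrow$(H3,$4\delta$), and (H3,$\delta$)$\Rightarrow$(H1,$8\delta$).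
   Context: An ordered abelian group is an abelian group with a total order compatible with addition; $\Lambda_{\mathbb{Q}}$ is its ordered divisible hull containing $\Lambda$. A $\Lambda$-metric space is a set $X$ with $d:X\times X\to\Lambda$ satisfying $d\geqslant0$, $d(x,y)=0\iff x=y$, symmetry and the triangle inequality. Gromov product: $(x\cdot y)_v=\tfrac12(d(x,v)+d(y,v)-d(x,y))\in\Lambda_{\mathbb{Q}}$. $X$ is $\delta$-hyperbolic if $(x\cdot y)_v\geqslant\min\{(x\cdot z)_v,(z\cdot y)_v\}-\delta$ for all $v,x,y,z\in X$. A segment $[p,q]$ is the image of an isometric map $\alpha:\{t\in\Lambda:a\leqslant t\leqslant b\}\to X$ (metric $|s-t|$) with $\alpha(a)=p,\alpha(b)=q$; $X$ is geodesic if any two points are endpoints of a segment. A geodesic triangle $\Delta(x,y,z)$ is a union of chosen segments $[x,y],[y,z],[x,z]$. It is $\delta$-thin if for each vertex, say $x$ (and likewise for $y$ and $z$), and all $u\in[x,y]$, $v\in[x,z]$ with $d(x,u)=d(x,v)\leqslant(y\cdot z)_x$, one has $d(u,v)\leqslant\delta$ (equivalently: points identified by the natural map of the triangle onto its comparison $\Lambda$-tripod are at distance $\leqslant\delta$). *)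

From HB Require Import structures.
From mathcomp Require Import all_boot all_order all_algebra.
Set Implicit Arguments. Unset Strict Implicit. Unset Printing Implicit Defensive.
Import GRing.Theory.
Local Open Scope ring_scope.

Section Defs.
Variable L : zmodType.
Variable le : rel L.

Definition ordered_abelian_group : Prop :=
  [/\ (forall a, le a a),
      (forall a b, le a b -> le b a -> a = b),
      (forall a b c, le a b -> le b c -> le a c),
      (forall a b, le a b || le b a)
    & (forall a b c, le a b -> le (a + c) (b + c))].

Definition minL (a b : L) : L := if le a b then a else b.
Definition absdiff (s t : L) : L := if le s t then t - s else s - t.

Variable X : Type.
Variable d : X -> X -> L.

Definition Lmetric : Prop :=
  [/\ (forall x y, le 0 (d x y)),
      (forall x y, d x y = 0 <-> x = y),
      (forall x y, d x y = d y x)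
    & (forall x y z, le (d x z) (d x y + d y z))].

Definition is_segment (S : X -> Prop) (p q : X) : Prop :=
  exists (a b : L) (alpha : L -> X),
    [/\ le a b,
        (forall s t, le a s -> le s b -> le a t -> le t b ->
             d (alpha s) (alpha t) = absdiff s t),
        alpha a = p, alpha b = q
      & (forall w, S w <-> exists t, [/\ le a t, le t b & alpha t = w])].

Definition geodesic : Prop := forall p q, exists S, is_segment S p q.

Definition geodesic_triangle (x y z : X) (Sxy Syz Sxz : X -> Prop) : Prop :=
  [/\ is_segment Sxy x y, is_segment Syz y z & is_segment Sxz x z].

(* gp x y v stands for the Gromov product (x . y)_v, assumed to lie in L *)
Variable gp : X -> X -> X -> L.

Definition hyperbolic (delta : L) : Prop :=
  forall v x y z, le (minL (gp x z v) (gp z y v) - delta) (gp x y v).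

Definition thin_at (x y z : X) (Sxy Sxz : X -> Prop) (delta : L) : Prop :=
  forall u v, Sxy u -> Sxz v -> d x u = d x v -> le (d x u) (gp y z x) ->
    le (d u v) delta.

Definition thin_triangle (x y z : X) (Sxy Syz Sxz : X -> Prop) (delta : L)
  : Prop :=
  [/\ thin_at x y z Sxy Sxz delta,
      thin_at y x z Sxy Syz delta
    & thin_at z x y Sxz Syz delta].

Definition H1 (delta : L) : Prop := hyperbolic delta.

Definition H2 (delta : L) : Prop :=
  forall x y z Sxy Syz Sxz, geodesic_triangle x y z Sxy Syz Sxz ->
    thin_triangle x y z Sxy Syz Sxz delta.

Definition H3 (delta : L) : Prop :=
  forall x y z Sxy Syz Sxz, geodesic_triangle x y z Sxy Syz Sxz ->
    forall u, Sxy u -> exists w, (Sxz w \/ Syz w) /\ le (d u w) delta.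

End Defs.

(* Almost every
   inequality of the proof is a known inequality shifted by an identity of
   abelian groups; the lemma [og_le_diff] performs such a shift, and the
   small reflexive tactic [abel] proves the identity. *)

From HB Require Import structures.
From mathcomp Require Import all_boot all_order all_algebra.
Import GRing.Theory.
Local Open Scope ring_scope.

Set Implicit Arguments.
Unset Strict Implicit.
Unset Printing Implicit Defensive.

(* A decision procedure for identities in an abelian group: both sides are
   reflected into formal expressions whose integer coefficient vectors are
   computed and compared with zero. *)
Inductive zexpr := ZVar of nat | ZAdd of zexpr & zexpr | ZOpp of zexpr | ZZero.

Fixpoint coef_add (c1 c2 : seq int) : seq int :=
  match c1, c2 with
  | [::], _ => c2
  | _, [::] => c1
  | x :: c1', y :: c2' => (x + y) :: coef_add c1' c2'
  end.

Fixpoint coefs (e : zexpr) : seq int :=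
  match e with
  | ZVar i => nseq i 0 ++ [:: 1]
  | ZAdd a b => coef_add (coefs a) (coefs b)
  | ZOpp a => map (fun x => - x) (coefs a)
  | ZZero => [::]
  end.

Section AbelianReflection.
Variable V : zmodType.

Fixpoint zeval (env : seq V) (e : zexpr) : V :=
  match e with
  | ZVar i => nth 0 env i
  | ZAdd a b => zeval env a + zeval env b
  | ZOpp a => - zeval env a
  | ZZero => 0
  end.

Fixpoint lincomb (env : seq V) (c : seq int) : V :=
  match c with
  | [::] => 0
  | x :: c' => head 0 env *~ x + lincomb (behead env) c'
  end.

Lemma lincomb_add env c1 c2 :
  lincomb env (coef_add c1 c2) = lincomb env c1 + lincomb env c2.
Proof.
elim: c1 env c2 => [|x c1 IH] env [|y c2] /=; rewrite ?add0r ?addr0 //.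
by rewrite IH mulrzDr addrACA.
Qed.

Lemma lincomb_opp env c : lincomb env (map (fun x => - x) c) = - lincomb env c.
Proof.
elim: c env => [|x c IH] env /=; first by rewrite oppr0.
by rewrite IH mulrNz opprD.
Qed.

Lemma lincomb_var env i : lincomb env (nseq i 0 ++ [:: 1]) = nth 0 env i.
Proof.
elim: i env => [|i IH] [|e env] /=; rewrite ?mulr1z ?addr0 ?mulr0z ?add0r //.
by rewrite (IH [::]) nth_nil.
Qed.

Lemma zeval_lincomb env e : zeval env e = lincomb env (coefs e).
Proof.
by elim: e => [i|a IHa b IHb|a IHa|] /=;
  rewrite ?lincomb_var ?lincomb_add ?lincomb_opp ?IHa ?IHb.
Qed.

Lemma zeval_eq0 env e : all (fun x => x == 0) (coefs e) -> zeval env e = 0.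
Proof.
rewrite zeval_lincomb; elim: (coefs e) env => [|x c IH] env //=.
by case/andP=> /eqP -> /IH ->; rewrite mulr0z addr0.
Qed.
End AbelianReflection.

Ltac abel_atoms e env :=
  lazymatch e with
  | ?a + ?b => let env' := abel_atoms a env in abel_atoms b env'
  | - ?a => abel_atoms a env
  | 0 => env
  | _ => lazymatch env with
         | context [e] => env
         | _ => constr:(e :: env)
         end
  end.

Ltac abel_index x l :=
  lazymatch l with
  | x :: _ => constr:(0%N)
  | _ :: ?l' => let n := abel_index x l' in constr:(n.+1)
  end.

Ltac abel_reify e env :=
  lazymatch e with
  | ?a + ?b =>
      let ra := abel_reify a env in let rb := abel_reify b env in
      constr:(ZAdd ra rb)
  | - ?a => let ra := abel_reify a env in constr:(ZOpp ra)
  | 0 => constr:(ZZero)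
  | _ => let i := abel_index e env in constr:(ZVar i)
  end.

(* Proves an equation [lhs = rhs] between sums, differences and natural
   multiples of atoms in a zmodType. *)
Ltac abel :=
  rewrite ?mulrS ?mulr0n; apply/eqP; rewrite -subr_eq0; apply/eqP;
  lazymatch goal with
  | |- @eq ?T ?e 0 =>
    let env := abel_atoms e (@nil T) in
    let r := abel_reify e env in
    change (zeval env r = 0); apply: zeval_eq0; vm_compute; reflexivity
  end.

Section Hyperbolicity.
Variables (L : zmodType) (le : rel L).
Hypothesis hL : ordered_abelian_group le.

Lemma og_refl a : le a a. Proof. by case: hL. Qed.
Lemma og_anti a b : le a b -> le b a -> a = b.
Proof. by case: hL => _ h _ _ _; apply: h. Qed.
Lemma og_trans a b c : le a b -> le b c -> le a c.
Proof. by case: hL => _ _ h _ _; apply: h. Qed.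
Lemma og_total a b : le a b || le b a. Proof. by case: hL. Qed.

Lemma og_le_diff a b a' b' : le a' b' -> b - a = b' - a' -> le a b.
Proof.
case: hL => _ _ _ _ hD /(hD _ _ (a - a')) h e.
have -> : a = a' + (a - a') by abel.
by have -> : b = b' + (a - a') by rewrite -(subrK a b) e; abel.
Qed.

Lemma og_le_diffE a b a' b' : b - a = b' - a' -> le a b = le a' b'.
Proof. by move=> e; apply/idP/idP => h; apply: og_le_diff h _. Qed.

Lemma og_leD a b c e : le a b -> le c e -> le (a + c) (b + e).
Proof.
move=> hab hce; apply: (og_trans (b := b + c)).
  by apply: og_le_diff hab _; abel.
by apply: og_le_diff hce _; abel.
Qed.

Lemma og_le_mul2 a b : le (a *+ 2) (b *+ 2) -> le a b.
Proof.
move=> h2; case/orP: (og_total a b) => // hba.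
have hab : le (a + b) (b + b).
  apply: (og_trans (b := a + a)); last by rewrite -!mulr2n.
  by apply: og_le_diff hba _; abel.
by apply: og_le_diff hab _; abel.
Qed.

Lemma og_mul2_inj (a b : L) : a *+ 2 = b *+ 2 -> a = b.
Proof.
by move=> e; apply: og_anti; apply: og_le_mul2; rewrite e og_refl.
Qed.

Lemma og_minl a b : le (minL le a b) a.
Proof.
rewrite /minL; case: ifP => h; first exact: og_refl.
by case/orP: (og_total a b); rewrite ?h.
Qed.

Lemma og_minr a b : le (minL le a b) b.
Proof. by rewrite /minL; case: ifP => h //; apply: og_refl. Qed.

Lemma og_min_glb c a b : le c a -> le c b -> le c (minL le a b).
Proof. by rewrite /minL; case: ifP. Qed.

Lemma absdiff_ge a s : le a s -> absdiff le a s = s - a.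
Proof. by rewrite /absdiff => ->. Qed.

Lemma absdiff_le s t e : le s (t + e) -> le t (s + e) -> le (absdiff le s t) e.
Proof.
rewrite /absdiff; case: ifP => _ h1 h2.
  by apply: og_le_diff h2 _; abel.
by apply: og_le_diff h1 _; abel.
Qed.

Lemma absdiff_sym s t : absdiff le s t = absdiff le t s.
Proof.
rewrite /absdiff; case: ifP => h1; case: ifP => h2 //.
- by rewrite (og_anti h1 h2).
- by case/orP: (og_total s t); rewrite ?h1 ?h2.
Qed.

Lemma absdiff_subr c s t : absdiff le (s - c) (t - c) = absdiff le s t.
Proof.
rewrite /absdiff (@og_le_diffE _ _ s t); last by abel.
by case: ifP => _; abel.
Qed.

Lemma absdiff_reflect c s t : absdiff le (c - s) (c - t) = absdiff le s t.
Proof.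
rewrite absdiff_sym /absdiff (@og_le_diffE _ _ s t); last by abel.
by case: ifP => _; abel.
Qed.

Lemma hyperbolic_mono (X : Type) (gp : X -> X -> X -> L) a b :
  le a b -> hyperbolic le gp a -> hyperbolic le gp b.
Proof.
move=> hab H v x y z; apply: og_trans _ (H v x y z).
by apply: og_le_diff hab _; abel.
Qed.

Section Segments.
Variables (X : Type) (d : X -> X -> L).
Hypothesis hd : Lmetric le d.

Lemma d_ge0 x y : le 0 (d x y). Proof. by case: hd. Qed.
Lemma d_sym x y : d x y = d y x. Proof. by case: hd. Qed.
Lemma d_tri x y z : le (d x z) (d x y + d y z).
Proof. by case: hd => _ _ _; apply. Qed.

Lemma segment_split S p q w : is_segment le d S p q -> S w ->
  d p w + d w q = d p q.
Proof.
case=> a [b [al [hab iso <- <- hS]]] /hS [s [has hsb <-]].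
by rewrite !iso ?og_refl // !absdiff_ge //; abel.
Qed.

Lemma segment_point S p q t : is_segment le d S p q -> le 0 t -> le t (d p q) ->
  exists w, S w /\ d p w = t.
Proof.
case=> a [b [al [hab iso hp hq hS]]] h0 ht.
have dpq : d p q = b - a by rewrite -hp -hq iso ?og_refl // absdiff_ge.
have hat : le a (a + t) by apply: og_le_diff h0 _; abel.
have htb : le (a + t) b by apply: og_le_diff ht _; rewrite dpq; abel.
exists (al (a + t)); split; first by apply/hS; exists (a + t).
by rewrite -hp iso ?og_refl // absdiff_ge //; abel.
Qed.

Lemma segment_dist S p q w w' : is_segment le d S p q -> S w -> S w' ->
  d w w' = absdiff le (d p w) (d p w').
Proof.
case=> a [b [al [hab iso <- _ hS]]] /hS [s [has hsb <-]] /hS [s' [has' hsb' <-]].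
by rewrite !iso ?og_refl // (absdiff_ge has) (absdiff_ge has') absdiff_subr.
Qed.

Lemma segment_close S p q w w' e : is_segment le d S p q -> S w -> S w' ->
  le (d p w) (d p w' + e) -> le (d p w') (d p w + e) -> le (d w w') e.
Proof. by move=> hS hw hw'; rewrite (segment_dist hS hw hw'); apply: absdiff_le. Qed.

Lemma segment_rev S p q : is_segment le d S p q -> is_segment le d S q p.
Proof.
case=> a [b [al [hab iso hp hq hS]]].
have inI s : le a s -> le s b -> le a (a + b - s) /\ le (a + b - s) b.
  by move=> h1 h2; split; [apply: og_le_diff h2 _ | apply: og_le_diff h1 _]; abel.
exists a, b, (fun t => al (a + b - t)); split => //.
- move=> s t /inI h1 /h1 [h5 h6] /inI h3 /h3 [h7 h8].
  by rewrite iso // absdiff_reflect.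
- by have -> : a + b - a = b by abel.
- by have -> : a + b - b = a by abel.
- move=> w; split=> [/hS [s [h1 h2 <-]]|[s [h1 h2 <-]]].
    have [h5 h6] := inI _ h1 h2.
    by exists (a + b - s); split => //; congr al; abel.
  by have [h5 h6] := inI _ h1 h2; apply/hS; exists (a + b - s).
Qed.

Lemma equidistant_close S a c u v w e : is_segment le d S a c -> S v -> S w ->
  d a u = d a v -> le (d u w) e -> le (d u v) (e + e).
Proof.
move=> hS hv hw hau huw.
have hvw : le (d v w) e.
  apply: (segment_close hS hv hw); rewrite -hau.
    by apply: og_le_diff (og_leD (d_tri a w u) huw) _; rewrite (d_sym w u); abel.
  by apply: og_le_diff (og_leD (d_tri a u w) huw) _; abel.
apply: og_trans (d_tri u w v) _; rewrite (d_sym w v); exact: og_leD.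
Qed.

Lemma thin_of_thin_at (gp : X -> X -> X -> L) delta :
  (forall a b c Sab Sbc Sac, geodesic_triangle le d a b c Sab Sbc Sac ->
     thin_at le d gp a b c Sab Sac delta) ->
  H2 le d gp delta.
Proof.
move=> thin x y z Sxy Syz Sxz [sxy syz sxz]; split.
- exact: (thin x y z Sxy Syz Sxz).
- by apply: (thin y x z Sxy Sxz Syz); split=> //; apply: segment_rev.
- by apply: (thin z x y Sxz Sxy Syz); split=> //; apply: segment_rev.
Qed.

Section GromovProduct.
Variable gp : X -> X -> X -> L.
Hypothesis hgp : forall x y v, gp x y v *+ 2 = d x v + d y v - d x y.

Lemma gp_sym x y v : gp x y v = gp y x v.
Proof. by apply: og_mul2_inj; rewrite !hgp (d_sym y x); abel. Qed.

Lemma gp_sum x y z : gp y z x + gp x z y = d x y.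
Proof.
apply: og_mul2_inj; rewrite mulrnDl !hgp (d_sym y x) (d_sym z y) (d_sym z x).
abel.
Qed.

Lemma gp_le x y v : le (gp x y v) (d x v).
Proof.
apply: og_le_mul2; rewrite hgp; apply: og_le_diff (d_tri y x v) _.
by rewrite (d_sym y x); abel.
Qed.

Lemma gp_ge0 x y v : le 0 (gp x y v).
Proof.
apply: og_le_mul2; rewrite hgp; apply: og_le_diff (d_tri x v y) _.
by rewrite (d_sym v y); abel.
Qed.

Lemma gp_on_segment S a b u : is_segment le d S a b -> S u -> gp u b a = d a u.
Proof.
move=> hS hu; apply: og_mul2_inj.
by rewrite hgp (d_sym u a) (d_sym b a) -(segment_split hS hu); abel.
Qed.

(* (H1, delta) => thinness at a vertex with constant 4 delta: two applications
   of the four-point condition compare (u . v)_a with d a u. *)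
Lemma hyperbolic_thin_at delta Sab Sac a b c : le 0 delta ->
  hyperbolic le gp delta -> is_segment le d Sab a b -> is_segment le d Sac a c ->
  thin_at le d gp a b c Sab Sac (delta *+ 4).
Proof.
move=> hdel H sab sac u v hu hv e ht.
have gub : gp u b a = d a u := gp_on_segment sab hu.
have gvc : gp c v a = d a u by rewrite gp_sym (gp_on_segment sac hv) e.
have hbv : le (d a u - delta) (gp b v a).
  have hmin : le (d a u) (minL le (gp b c a) (gp c v a)).
    by apply: og_min_glb => //; rewrite gvc og_refl.
  by apply: og_trans _ (H a b v c); apply: og_le_diff hmin _; abel.
have huv : le (d a u - delta - delta) (gp u v a).
  have hmin : le (d a u - delta) (minL le (gp u b a) (gp b v a)).
    by apply: og_min_glb => //; rewrite gub; apply: og_le_diff hdel _; abel.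
  by apply: og_trans _ (H a u v b); apply: og_le_diff hmin _; abel.
have := og_leD huv huv; rewrite -!mulr2n hgp (d_sym u a) (d_sym v a) -e => h.
by apply: og_le_diff h _; abel.
Qed.

(* (H2, delta) => (H1, delta): the points at distance min((x.z)_v, (z.y)_v)
   from v on [v,x], [v,z], [v,y] are pairwise delta-close. *)
Lemma thin_hyperbolic delta : geodesic le d -> H2 le d gp delta ->
  hyperbolic le gp delta.
Proof.
move=> hg H v x y z.
set t := minL le (gp x z v) (gp z y v).
have ht0 : le 0 t by apply: og_min_glb; apply: gp_ge0.
have htx : le t (d v x).
  by rewrite d_sym; apply: og_trans (og_minl _ _) (gp_le _ _ _).
have htz : le t (d v z).
  by rewrite d_sym; apply: og_trans (og_minl _ _) _; rewrite gp_sym; apply: gp_le.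
have hty : le t (d v y).
  by rewrite d_sym; apply: og_trans (og_minr _ _) _; rewrite gp_sym; apply: gp_le.
have [Svx svx] := hg v x; have [Svz svz] := hg v z; have [Svy svy] := hg v y.
have [Sxz sxz] := hg x z; have [Szy szy] := hg z y.
have [a [ha pa]] := segment_point svx ht0 htx.
have [c [hc pc]] := segment_point svz ht0 htz.
have [b [hb pb]] := segment_point svy ht0 hty.
have [thin_vxz _ _] := H v x z Svx Sxz Svz (And3 svx sxz svz).
have [thin_vzy _ _] := H v z y Svz Szy Svy (And3 svz szy svy).
have hac : le (d a c) delta by apply: thin_vxz; rewrite ?pa ?pc ?og_minl.
have hcb : le (d c b) delta by apply: thin_vzy; rewrite ?pb ?pc ?og_minr.
have hxy : le (d x y) (d x a + d a c + d c b + d b y).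
  apply: og_trans (d_tri x a y) _; rewrite -!addrA; apply: og_leD (og_refl _) _.
  apply: og_trans (d_tri a c y) _; apply: og_leD (og_refl _) _; exact: d_tri.
apply: og_le_mul2; rewrite hgp (d_sym x v) (d_sym y v).
rewrite -(segment_split svx ha) -(segment_split svy hb) pa pb (d_sym a x).
apply: og_le_diff (og_leD hxy (og_leD hac hcb)) _; abel.
Qed.

(* (H2, delta) => (H3, delta): a point of [x,y] close to x (resp. y) in the
   sense of the comparison tripod is matched on [x,z] (resp. [y,z]). *)
Lemma thin_slim delta : H2 le d gp delta -> H3 le d delta.
Proof.
move=> H x y z Sxy Syz Sxz tri u hu.
have [sxy syz sxz] := tri; have [thin_x thin_y _] := H _ _ _ _ _ _ tri.
case/orP: (og_total (d x u) (gp y z x)) => hle.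
  have hxz : le (d x u) (d x z).
    by apply: og_trans hle _; rewrite gp_sym d_sym; apply: gp_le.
  have [v [hv pv]] := segment_point sxz (d_ge0 _ _) hxz.
  by exists v; split; [left | apply: thin_x].
have hyu : le (d y u) (gp x z y).
  have Eyu : d y u = d x y - d x u by rewrite -(segment_split sxy hu) d_sym; abel.
  have Egp : gp x z y = d x y - gp y z x by rewrite -(gp_sum x y z); abel.
  by rewrite Eyu Egp; apply: og_le_diff hle _; abel.
have hyz : le (d y u) (d y z).
  by apply: og_trans hyu _; rewrite gp_sym d_sym; apply: gp_le.
have [w [hw pw]] := segment_point syz (d_ge0 _ _) hyz.
by exists w; split; [right | apply: thin_y].
Qed.

(* The remaining case of (H3) => thinness: u in [a,b] and v in [a,c] at
   distance t <= (b.c)_a from a are e-close to points w1, w2 of [b,c]; the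
   triangle inequality and t <= (b.c)_a force w1, w2 to be 2e-close. *)
Lemma slim_far_case Sab Sac Sbc a b c u v w1 w2 e :
  is_segment le d Sab a b -> is_segment le d Sac a c ->
  is_segment le d Sbc b c -> Sab u -> Sac v -> Sbc w1 -> Sbc w2 ->
  d a u = d a v -> le (d a u) (gp b c a) ->
  le (d u w1) e -> le (d v w2) e -> le (d u v) (e *+ 4).
Proof.
move=> sab sac sbc hu hv hw1 hw2 hau ht d1 d2.
have Ebw1 : d b w1 = d b c - d w1 c by rewrite -(segment_split sbc hw1); abel.
have Ebw2 : d b w2 = d b c - d w2 c by rewrite -(segment_split sbc hw2); abel.
have Ecv : d c v = d a c - d a u by rewrite d_sym -(segment_split sac hv) -hau; abel.
have Ebu : d b u = d a b - d a u by rewrite d_sym -(segment_split sab hu); abel.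
(* w2 is not much farther from c than w1: triangle inequality only. *)
have near_c : le (d c w2) (d c w1 + e + e).
  have := og_leD (og_leD (og_leD (d_tri a u c) (d_tri u w1 c)) (d_tri c v w2))
            (og_leD d1 d2).
  by rewrite Ecv => h; apply: og_le_diff h _; rewrite (d_sym c w1); abel.
(* w2 is not much farther from b than w1: this uses t <= (b.c)_a. *)
have near_b : le (d b w2) (d b w1 + e + e).
  have ht2 : le (d a u *+ 2) (d b a + d c a - d b c).
    by rewrite -hgp mulr2n; apply: og_leD.
  have := og_leD (og_leD (og_leD (d_tri b w1 u) (d_tri c w2 v)) (og_leD d1 d2)) ht2.
  rewrite (d_sym w1 u) (d_sym w2 v) (d_sym b a) (d_sym c a) Ecv Ebu.
  by move=> h; apply: og_le_diff h _; rewrite Ebw2 (d_sym w2 c); abel.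
have hw12 : le (d w1 w2) (e + e).
  apply: (segment_close sbc hw1 hw2); last by rewrite addrA.
  by rewrite Ebw1 Ebw2; apply: og_le_diff near_c _; rewrite (d_sym c w1) (d_sym c w2); abel.
apply: og_trans (d_tri u w1 v) _; apply: og_trans (og_leD (og_refl _) (d_tri w1 w2 v)) _.
by rewrite (d_sym w2 v); apply: og_le_diff (og_leD d1 (og_leD hw12 d2)) _; abel.
Qed.

(* (H3, delta) => thinness at a vertex with constant 4 delta: u and v are
   delta-close to points w1, w2 of the other sides; if w1 lies on [a,c] or w2
   on [a,b] conclude by [equidistant_close], otherwise by [slim_far_case]. *)
Lemma slim_thin_at delta Sab Sac Sbc a b c : le 0 delta -> H3 le d delta ->
  is_segment le d Sab a b -> is_segment le d Sac a c ->
  is_segment le d Sbc b c -> thin_at le d gp a b c Sab Sac (delta *+ 4).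
Proof.
move=> hdel H sab sac sbc u v hu hv hau ht.
have h2_4 : le (delta + delta) (delta *+ 4).
  by apply: og_le_diff (og_leD hdel hdel) _; abel.
have [w1 [hw1 d1]] := H a b c Sab Sbc Sac (And3 sab sbc sac) u hu.
have [w2 [hw2 d2]] := H a c b Sac Sbc Sab (And3 sac (segment_rev sbc) sab) v hv.
case: hw1 => [hw1|hw1].
  exact: og_trans (equidistant_close sac hv hw1 hau d1) h2_4.
case: hw2 => [hw2|hw2].
  by rewrite d_sym; apply: og_trans (equidistant_close sab hu hw2 (esym hau) d2) h2_4.
exact: (slim_far_case sab sac sbc hu hv hw1 hw2 hau ht d1 d2).
Qed.

End GromovProduct.
End Segments.
End Hyperbolicity.

Theorem proposition1p2p9 (L : zmodType) (le : rel L) (X : Type)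
  (d : X -> X -> L) (gp : X -> X -> X -> L)
  (hL : ordered_abelian_group le)
  (hd : Lmetric le d)
  (hgeo : geodesic le d)
  (hgp : forall x y v, gp x y v *+ 2 = d x v + d y v - d x y)
  (delta : L) (hdelta : le 0 delta) :
  (H1 le gp delta -> H2 le d gp (delta *+ 4)) /\
  (H2 le d gp delta -> H1 le gp (delta *+ 2)) /\
  (H2 le d gp delta -> H3 le d delta) /\
  (H3 le d delta -> H2 le d gp (delta *+ 4)) /\
  (H1 le gp delta -> H3 le d (delta *+ 4)) /\
  (H3 le d delta -> H1 le gp (delta *+ 8)).
Proof.
have H1H2 : H1 le gp delta -> H2 le d gp (delta *+ 4).
  move=> hyp; apply: thin_of_thin_at => // a b c Sab Sbc Sac [sab _ sac].
  exact: hyperbolic_thin_at.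
have H3H2 : H3 le d delta -> H2 le d gp (delta *+ 4).
  move=> slim; apply: thin_of_thin_at => // a b c Sab Sbc Sac [sab sbc sac].
  exact: (slim_thin_at hL hd hgp hdelta slim sab sac sbc).
have H2H1 k : H2 le d gp k -> H1 le gp k by apply: thin_hyperbolic.
have H2H3 k : H2 le d gp k -> H3 le d k by apply: thin_slim.
have le_2 : le delta (delta *+ 2) by apply: (og_le_diff hL hdelta); abel.
have le_8 : le (delta *+ 4) (delta *+ 8).
  have le_4 := og_leD hL (og_leD hL hdelta hdelta) (og_leD hL hdelta hdelta).
  by apply: (og_le_diff hL le_4); abel.
split; first exact: H1H2.
split; first by move/H2H1; apply: (hyperbolic_mono hL le_2).
split; first exact: H2H3.
split; first exact: H3H2.
split; first by move/H1H2/H2H3.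
by move/H3H2/H2H1; apply: (hyperbolic_mono hL le_8).
Qed.
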